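(* Let $d,f\in\mathbb{C}$ with $f\neq 0$, and let $\tau_1:T_4\to\mathrm{GL}_5(\mathbb{C})$ be defined by $\tau_1(s_i)=\mathrm{diag}(I_{i-1},M_1,I_{3-i})$ for $1\leq i\leq 3$, where $M_1=\begin{pmatrix}1&0&0\\ d&-1&f\\ 0&0&1\end{pmatrix}$. Then $\tau_1$ has a composition factor $\tau_1^{(1)}:T_4\to\mathrm{GL}_3(\mathbb{C})$ given by $$\tau_1^{(1)}(s_1)=\begin{pmatrix}-1&f&0\\ 0&1&0\\ 0&0&1\end{pmatrix},\quad \tau_1^{(1)}(s_2)=\begin{pmatrix}1&0&0\\ d&-1&f\\ 0&0&1\end{pmatrix},\quad \tau_1^{(1)}(s_3)=\begin{pmatrix}1&0&0\\ 0&1&0\\ 0&d&-1\end{pmatrix}.$$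
   Context: The twin group $T_4$ is the group with generators $s_1,s_2,s_3$ and defining relations $s_i^2=1$ for $1\leq i\leq 3$ and $s_1s_3=s_3s_1$. $\mathrm{diag}(A,B,C)$ denotes a block-diagonal matrix and $I_r$ the $r\times r$ identity matrix ($I_0$ empty). A composition factor means a subquotient representation (quotient of an invariant subspace by a smaller invariant subspace). *)

From HB Require Import structures.
From mathcomp Require Import all_boot all_order all_algebra.
From mathcomp Require Import complex.
From mathcomp Require Import Rstruct.
Set Implicit Arguments. Unset Strict Implicit. Unset Printing Implicit Defensive.
Import Order.TTheory GRing.Theory Num.Theory.
Local Open Scope ring_scope.

Notation C := (complex Rdefinitions.R).

Definition mx3 {F : nzRingType} (a b c d e f g h k : F) : 'M[F]_3 :=
  \matrix_(i < 3, j < 3)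
    nth 0 (nth [::] [:: [:: a; b; c]; [:: d; e; f]; [:: g; h; k]] i) j.

(* For the paper's s_i (1 <= i <= 3) we use p = i - 1. *)
Definition diag_block3 {F : nzRingType} (n p : nat) (M : 'M[F]_3) : 'M[F]_n :=
  \matrix_(r < n, c < n)
    if (p <= r < p + 3)%N && (p <= c < p + 3)%N
    then M (inord (r - p)) (inord (c - p))
    else (r == c)%:R.

(* A representation of the twin group T_4 = < s1,s2,s3 | s_i^2 = 1,
   s1 s3 = s3 s1 > in GL_n(F) is determined by the images of the generators
   (indexed by 'I_3, index i standing for s_(i+1)); these must be invertible
   and satisfy the defining relations. *)
Definition T4_rep {F : fieldType} (n : nat) (rho : 'I_3 -> 'M[F]_n) : Prop :=
  [/\ forall i, rho i \in unitmx,
      forall i, rho i *m rho i = 1%:M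
    & rho 0 *m rho 2 = rho 2 *m rho 0].

(* Matrices act on COLUMN vectors
   v |-> rho v; subspaces of F^n are encoded (mxalgebra convention) as row
   spaces of n x n matrices, identifying a column vector with its transpose,
   so that rho-invariance of a subspace U reads  U *m rho^T <= U.
   [mx_subquotient rho sigma] says: there are rho-invariant subspaces
   W <= U of F^n and a linear map phi : F^n -> F^m (v^T |-> v^T *m phi)
   whose restriction to U is onto F^m with kernel exactly W (so it induces
   a linear isomorphism U/W ~ F^m) and which intertwines the action induced
   by rho on U/W with sigma:  phi(rho v) = sigma (phi v) for all v in U. *)
Definition mx_subquotient {F : fieldType} (n m : nat)
    (rho : 'I_3 -> 'M[F]_n) (sigma : 'I_3 -> 'M[F]_m) : Prop :=
  exists (U W : 'M[F]_n) (phi : 'M[F]_(n, m)),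
    [/\ (W <= U)%MS,
        forall i, (U *m (rho i)^T <= U)%MS,
        forall i, (W *m (rho i)^T <= W)%MS,
        row_full (U *m phi) /\
        ((U :&: kermx phi) == W)%MS
      & forall i, U *m ((rho i)^T *m phi) = U *m (phi *m (sigma i)^T)].

Definition M1 (d f : C) : 'M[C]_3 := mx3 1 0 0  d (-1) f  0 0 1.

Definition tau1 (d f : C) (i : 'I_3) : 'M[C]_5 := diag_block3 5 i (M1 d f).

Definition tau1_1 (d f : C) (i : 'I_3) : 'M[C]_3 :=
  match val i with
  | 0%N => mx3 (-1) f 0  0 1 0  0 0 1
  | 1%N => mx3 1 0 0  d (-1) f  0 0 1
  | _ => mx3 1 0 0  0 1 0  0 d (-1)
  end.

(* Only the middle row of M_1 differs from the identity, so tau1(s_i) sends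
   each e_j to a combination of e_j and e_(i+1), and e_(i+1) is one of e_2,
   e_3, e_4.  Hence span(e_2, e_3, e_4) is tau1-invariant, and in this basis
   the restriction of tau1 is exactly tau1^(1): the composition factor is
   even a subrepresentation (W = 0). *)
From HB Require Import structures.
From mathcomp Require Import all_boot all_order all_algebra.
From mathcomp Require Import complex.
From mathcomp Require Import Rstruct.
From mathcomp Require Import ring.
Import GRing.Theory.
Local Open Scope ring_scope.

Lemma T4_rep_of_involutions (F : fieldType) n (rho : 'I_3 -> 'M[F]_n) :
  (forall i, rho i *m rho i = 1%:M) -> rho 0 *m rho 2 = rho 2 *m rho 0 ->
  T4_rep rho.
Proof. by move=> rho_sq rho02; split=> // i; exact: (mulmx1_unit (rho_sq i)).1. Qed.

(* The columns of [E^T] span a [rho]-stable subspace on which [rho] acts by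
   [sigma]: a subrepresentation, i.e. a subquotient with [W = 0]. *)
Section Subrepresentation.

Variables (F : fieldType) (n m : nat).
Variables (rho : 'I_3 -> 'M[F]_n) (sigma : 'I_3 -> 'M[F]_m) (E : 'M[F]_(m, n)).
Hypothesis E_free : row_free E.
Hypothesis E_intertwines : forall i, E *m (rho i)^T = (sigma i)^T *m E.

Lemma mx_subquotient_of_intertwiner : mx_subquotient rho sigma.
Proof.
have [X defU] : exists X, <<E>>%MS = X *m E by apply/submxP; rewrite genmxE.
have [P EK] : exists P, E *m P = 1%:M by exact/row_freeP.
exists <<E>>%MS, 0, P; split.
- exact: sub0mx.
- by move=> i; rewrite (eqmxMr _ (genmxE E)) genmxE E_intertwines submxMl.
- by move=> i; rewrite mul0mx sub0mx.
- split; first by rewrite /row_full (eqmxMr _ (genmxE E)) EK mxrank1.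
  rewrite sub0mx andbT; apply/rV_subP => v.
  rewrite sub_capmx genmxE => /andP[/submxP[x ->] /sub_kermxP].
  by rewrite -mulmxA EK mulmx1 => ->; rewrite mul0mx sub0mx.
- move=> i; rewrite defU -!mulmxA (mulmxA E) E_intertwines.
  by rewrite -!mulmxA EK mulmx1 (mulmxA E) EK mul1mx.
Qed.

End Subrepresentation.

Definition shift_mx (R : nzRingType) (m n k : nat) : 'M[R]_(m, n) :=
  \matrix_(i < m, j < n) (j == i + k :> nat)%N%:R.

Lemma shift_mx_row_free (F : fieldType) m n k :
  (m + k <= n)%N -> row_free (shift_mx F m n k).
Proof.
move=> le_mk_n; apply/row_freeP; exists (shift_mx F m n k)^T.
apply/matrixP => i i'; rewrite !mxE.
have ik_lt_n : (i + k < n)%N by apply: leq_trans le_mk_n; rewrite ltn_add2r.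
rewrite (bigD1 (Ordinal ik_lt_n)) //= big1 => [|j /negbTE neq_j].
  by rewrite !mxE eqxx mul1r addr0 eqn_add2r.
by move: neq_j; rewrite -val_eqE !mxE /= => ->; rewrite mul0r.
Qed.

Ltac mx_entrywise :=
  apply/matrixP; let i := fresh "i" in let j := fresh "j" in intros i j;
  repeat progress rewrite ?mxE ?big_ord_recr ?big_ord0 /=;
  case: i => [[|[|[|[|[|?]]]]] ?]; case: j => [[|[|[|[|[|?]]]]] ?] //;
  rewrite /tau1 /tau1_1 /diag_block3 /M1 /mx3 /shift_mx /=;
  repeat progress rewrite ?mxE /=; rewrite ?inordK //=; ring.

Section Tau1.

Variables d f : C.

Lemma tau1_involutive i : tau1 d f i *m tau1 d f i = 1%:M.
Proof. by case: i => [[|[|[|?]]] ?] //; mx_entrywise. Qed.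

Lemma tau1_commute : tau1 d f 0 *m tau1 d f 2 = tau1 d f 2 *m tau1 d f 0.
Proof. by mx_entrywise. Qed.

Lemma tau1_1_involutive i : tau1_1 d f i *m tau1_1 d f i = 1%:M.
Proof. by case: i => [[|[|[|?]]] ?] //; mx_entrywise. Qed.

Lemma tau1_1_commute : tau1_1 d f 0 *m tau1_1 d f 2 = tau1_1 d f 2 *m tau1_1 d f 0.
Proof. by mx_entrywise. Qed.

Lemma tau1_restrict_middle i :
  shift_mx C 3 5 1 *m (tau1 d f i)^T = (tau1_1 d f i)^T *m shift_mx C 3 5 1.
Proof. by case: i => [[|[|[|?]]] ?] //; mx_entrywise. Qed.

End Tau1.

Theorem theorem3p3 (d f : C) (hf : f != 0) :
  T4_rep (tau1 d f) /\ T4_rep (tau1_1 d f) /\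
  mx_subquotient (tau1 d f) (tau1_1 d f).
Proof.
split; [|split].
- exact: T4_rep_of_involutions (tau1_involutive d f) (tau1_commute d f).
- exact: T4_rep_of_involutions (tau1_1_involutive d f) (tau1_1_commute d f).
- apply: (@mx_subquotient_of_intertwiner _ _ _ _ _ (shift_mx C 3 5 1)).
    exact: shift_mx_row_free.
  exact: tau1_restrict_middle.
Qed.
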